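(* Let $B=2\pi/\sqrt{6}$, $F(\alpha)=\dfrac{1+e^{-\alpha}}{1+e^{-\alpha}+e^{-2\alpha}}$, and for integers $n,\ell\ge 0$ let $Q_1(n,\ell)=2n(3n+1)+3n\ell$ and $Q_2(n,\ell)=Q_1(n,\ell)+8n+4+2\ell$. Define $$I_M(\ell,N)=\sum_{n\ge 0}\left(e^{-\frac{BQ_1(n,\ell)}{2\sqrt{N}}}-e^{-\frac{BQ_2(n,\ell)}{2\sqrt{N}}}\right).$$ Then, uniformly for integers $0\le\ell\le\sqrt{N}(\log N)^2$, as $N\to\infty$, $$I_M(\ell,N)=\left(1+O\left(N^{-1/10}\right)\right)F\left(\frac{B\ell}{2\sqrt{N}}\right).$$ *)

From Stdlib Require Import Reals.
Open Scope R_scope.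

Definition B : R := 2 * PI / sqrt 6.

Definition F (a : R) : R :=
  (1 + exp (- a)) / (1 + exp (- a) + exp (- (2 * a))).

Definition Q1 (n l : nat) : R :=
  2 * INR n * (3 * INR n + 1) + 3 * INR n * INR l.
Definition Q2 (n l : nat) : R := Q1 n l + 8 * INR n + 4 + 2 * INR l.

Definition IM_term (l N : nat) (n : nat) : R :=
  exp (- (B * Q1 n l / (2 * sqrt (INR N))))
  - exp (- (B * Q2 n l / (2 * sqrt (INR N)))).

(* Put t = B / (2 sqrt N) and a = t l.  Since Q1(n, l) = 6 n^2 + (2 + 3 l) n
   and Q2(n, l) is the same quadratic evaluated at n + 2/3, the n-th summand
   of I_M(l, N) is psi(n) - psi(n + 2/3) for the profile
   psi(x) = exp(-(6 t x^2 + b x)) with b = 2 t + 3 a.  The series converges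
   because psi decreases, and its sum S is compared with F(a) at a scale
   tau in (0, 1] with t <= tau^4, in two regimes:

   - a < tau: by the mean value theorem the summands are (2/3) g(xi n),
     while psi(n + 2/3) - psi(n + 1) = (1/3) g(eta n), where g = -psi' is
     unimodal on [0, oo).  Alternating sums of a unimodal function are
     bounded by its maximum, so S is within (2/9) (b + sqrt (6 t)) of the
     telescoped value 2/3, and 2/3 <= F(a) <= 2/3 + a.
   - a >= tau: dropping the factor exp(-(6 t x^2 + 2 t x)) from psi leaves
     the geometric series sum_n (1 - e^{-2a}) e^{-3 a n} = F(a), at a total
     cost O(t / a^3).

   Both give |S - F(a)| <= 40 tau. *)

From Stdlib Require Import Reals Lra Lia ClassicalEpsilon.
From Coquelicot Require Import Coquelicot.
Open Scope R_scope.

Lemma interlaced_gap_sum (c d : nat -> R) (M : nat) :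
  (forall n, c n <= d n <= c (S n)) ->
  0 <= sum_f_R0 (fun n => d n - c n) M <= d M - c 0%nat.
Proof.
  intros Hcd; induction M as [|M IH]; simpl.
  - specialize (Hcd 0%nat); lra.
  - pose proof (Hcd M); pose proof (Hcd (S M)); lra.
Qed.

Lemma telescoping_sum (f : nat -> R) (M : nat) :
  sum_f_R0 (fun n => f n - f (S n)) M = f 0%nat - f (S M).
Proof. induction M as [|M IH]; simpl; [ring | rewrite IH; ring]. Qed.

Lemma Un_cv_const (c : R) : Un_cv (fun _ => c) c.
Proof.
  intros e He; exists 0%nat; intros n _.
  unfold R_dist; rewrite Rminus_diag, Rabs_R0; lra.
Qed.

Lemma Un_cv_ext (u v : nat -> R) (l : R) :
  (forall n, u n = v n) -> Un_cv u l -> Un_cv v l.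
Proof.
  intros Huv Hu e He; destruct (Hu e He) as [N HN].
  exists N; intros n Hn; rewrite <- Huv; auto.
Qed.

Lemma Un_cv_dist_le (u v : nat -> R) (l m E : R) :
  Un_cv u l -> Un_cv v m -> (forall n, Rabs (u n - v n) <= E) ->
  Rabs (l - m) <= E.
Proof.
  intros Hu Hv HE.
  pose proof (CV_minus _ _ _ _ Hu Hv) as Hd.
  assert (Hbnd : forall n, - E <= u n - v n <= E)
    by (intros n; apply Rabs_le_between, HE).
  apply Rabs_le_between; split.
  - apply (Rle_cv_lim (Un := fun _ => - E) (Vn := fun n => u n - v n));
      [intros n; apply Hbnd | apply Un_cv_const | exact Hd].
  - apply (Rle_cv_lim (Un := fun n => u n - v n) (Vn := fun _ => E));
      [intros n; apply Hbnd | exact Hd | apply Un_cv_const].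
Qed.

Lemma geometric_cv (c q : R) : 0 <= q < 1 ->
  Un_cv (fun M => sum_f_R0 (fun n => c * q ^ n) M) (c / (1 - q)).
Proof.
  intros Hq; unfold Rdiv.
  apply Un_cv_ext with (fun M => c * sum_f_R0 (fun n => 1 * q ^ n) M).
  - intros M; rewrite scal_sum; apply sum_eq; intros; ring.
  - apply CV_mult; [apply Un_cv_const |].
    apply GP_infinite; rewrite Rabs_pos_eq; lra.
Qed.

Lemma exp_mult_INR (c : R) (n : nat) : exp (c * INR n) = exp c ^ n.
Proof.
  induction n as [|n IH]; [simpl; rewrite Rmult_0_r; apply exp_0 |].
  rewrite S_INR, Rmult_plus_distr_l, exp_plus, IH, Rmult_1_r; simpl; ring.
Qed.

Lemma exp_le_compat (x y : R) : x <= y -> exp x <= exp y.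
Proof. intros [Hlt | ->]; [left; apply exp_increasing; exact Hlt | lra]. Qed.

Lemma one_plus_mul_exp_neg_le (a : R) : (1 + a) * exp (- a) <= 1.
Proof.
  pose proof (exp_ineq1_le a) as Hlin.
  assert (Hinv : exp a * exp (- a) = 1)
    by (rewrite <- exp_plus, Rplus_opp_r; apply exp_0).
  pose proof (exp_pos (- a)); nra.
Qed.

(* 2 u e^{-u^2} <= 1, since 2 u <= 1 + u^2 <= e^{u^2}. *)
Lemma two_mul_exp_neg_sq_le (u : R) : 2 * u * exp (- (u ^ 2)) <= 1.
Proof.
  pose proof (exp_ineq1_le (u ^ 2)) as Hlin.
  assert (Hinv : exp (u ^ 2) * exp (- (u ^ 2)) = 1)
    by (rewrite <- exp_plus, Rplus_opp_r; apply exp_0).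
  pose proof (exp_pos (- (u ^ 2))).
  assert (H2u : 2 * u <= exp (u ^ 2)) by (pose proof (pow2_ge_0 (u - 1)); nra).
  replace 1 with (exp (u ^ 2) * exp (- (u ^ 2))) by exact Hinv.
  apply Rmult_le_compat_r; lra.
Qed.

Definition psi (t b x : R) : R := exp (- (6 * t * x ^ 2 + b * x)).
Definition g (t b x : R) : R := (12 * t * x + b) * psi t b x.
Definition dg (t b x : R) : R := (12 * t - (12 * t * x + b) ^ 2) * psi t b x.

Lemma psi_derive (t b x : R) : derivable_pt_lim (psi t b) x (- g t b x).
Proof.
  apply is_derive_Reals; unfold psi, g; auto_derive; [easy | unfold psi; simpl; ring].
Qed.

Lemma g_derive (t b x : R) : derivable_pt_lim (g t b) x (dg t b x).
Proof.
  apply is_derive_Reals; unfold g, dg, psi; auto_derive; [easy | unfold psi; simpl; ring].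
Qed.

Lemma psi_pos (t b x : R) : 0 < psi t b x.
Proof. apply exp_pos. Qed.

Lemma psi_at_0 (t b : R) : psi t b 0 = 1.
Proof. unfold psi; rewrite <- exp_0; f_equal; ring. Qed.

Lemma psi_antitone (t b x y : R) : 0 <= t -> 0 <= b -> 0 <= x <= y ->
  psi t b y <= psi t b x.
Proof.
  intros Ht Hb Hxy; unfold psi; apply exp_le_compat.
  assert (x ^ 2 <= y ^ 2) by nra.
  assert (t * x ^ 2 <= t * y ^ 2) by (apply Rmult_le_compat_l; lra).
  assert (b * x <= b * y) by (apply Rmult_le_compat_l; lra).
  lra.
Qed.

Lemma psi_mvt (t b x d : R) : 0 < d ->
  exists c, x < c < x + d /\ psi t b x - psi t b (x + d) = d * g t b c.
Proof.
  intros Hd.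
  destruct (MVT_cor2 (psi t b) (fun y => - g t b y) x (x + d))
    as [c [Hc Hcx]]; [lra | intros; apply psi_derive |].
  exists c; split; [exact Hcx | lra].
Qed.

Lemma g_nonneg (t b x : R) : 0 <= t -> 0 <= b -> 0 <= x -> 0 <= g t b x.
Proof.
  intros; unfold g; apply Rmult_le_pos; [nra | left; apply psi_pos].
Qed.

Lemma g_le (t b x : R) : 0 <= t -> 0 <= b -> 0 <= x ->
  g t b x <= b + sqrt (6 * t).
Proof.
  intros Ht Hb Hx.
  set (s := sqrt (6 * t)).
  assert (Hs : s * s = 6 * t) by (apply sqrt_sqrt; lra).
  assert (Hs0 : 0 <= s) by apply sqrt_pos.
  assert (Hpsi1 : psi t b x <= 1)
    by (rewrite <- (psi_at_0 t b); apply psi_antitone; lra).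
  assert (Hgauss : 12 * t * x * psi t b x <= s).
  { assert (Hdrop : psi t b x <= exp (- ((s * x) ^ 2)))
      by (unfold psi; apply exp_le_compat; nra).
    pose proof (two_mul_exp_neg_sq_le (s * x)) as Hu.
    assert (E : s * (2 * (s * x)) = 12 * t * x)
      by (replace (s * (2 * (s * x))) with (2 * (s * s) * x) by ring;
          rewrite Hs; ring).
    rewrite <- E.
    assert (0 <= s * (2 * (s * x))) by nra.
    apply Rle_trans with (s * (2 * (s * x)) * exp (- ((s * x) ^ 2))).
    - apply Rmult_le_compat_l; lra.
    - replace (s * (2 * (s * x)) * exp (- ((s * x) ^ 2)))
        with (s * (2 * (s * x) * exp (- ((s * x) ^ 2)))) by ring.
      apply Rle_trans with (s * 1); [apply Rmult_le_compat_l |]; lra. }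
  unfold g. pose proof (psi_pos t b x). nra.
Qed.

(* g increases on [0, peak t b] and decreases on [peak t b, oo): dg has the
   sign of 12 t - (12 t x + b)^2, which changes where 12 t x + b = sqrt (12 t). *)
Definition peak (t b : R) : R := Rmax 0 ((sqrt (12 * t) - b) / (12 * t)).

Lemma peak_nonneg (t b : R) : 0 <= peak t b.
Proof. apply Rmax_l. Qed.

Lemma critical_point (t b : R) : 0 < t ->
  12 * t * ((sqrt (12 * t) - b) / (12 * t)) + b = sqrt (12 * t).
Proof. intros; field; lra. Qed.

Lemma g_increasing (t b x y : R) : 0 < t -> 0 <= b ->
  0 <= x <= y -> y <= peak t b -> g t b x <= g t b y.
Proof.
  intros Ht Hb Hxy Hy.
  destruct (Req_dec x y) as [-> | Hne]; [lra |].
  destruct (MVT_cor2 (g t b) (dg t b) x y) as [c [Hgc Hc]];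
    [lra | intros; apply g_derive |].
  set (p := (sqrt (12 * t) - b) / (12 * t)).
  assert (Hp : peak t b = p).
  { unfold peak, Rmax in Hy |- *; fold p in Hy |- *; destruct Rle_dec; lra. }
  assert (Hlin : 12 * t * c + b <= sqrt (12 * t)).
  { rewrite <- (critical_point t b Ht); fold p.
    apply Rplus_le_compat_r, Rmult_le_compat_l; lra. }
  assert (Hsq : (12 * t * c + b) ^ 2 <= 12 * t).
  { pose proof (sqrt_sqrt (12 * t)); assert (0 <= 12 * t * c + b) by nra; nra. }
  assert (0 <= dg t b c)
    by (unfold dg; apply Rmult_le_pos; [lra | left; apply psi_pos]).
  nra.
Qed.

Lemma g_decreasing (t b x y : R) : 0 < t -> 0 <= b ->
  peak t b <= x <= y -> g t b y <= g t b x.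
Proof.
  intros Ht Hb Hxy.
  destruct (Req_dec x y) as [-> | Hne]; [lra |].
  destruct (MVT_cor2 (g t b) (dg t b) x y) as [c [Hgc Hc]];
    [lra | intros; apply g_derive |].
  set (p := (sqrt (12 * t) - b) / (12 * t)).
  assert (Hpc : p <= c)
    by (pose proof (Rmax_r 0 p); unfold peak in Hxy; fold p in Hxy; lra).
  assert (Hc0 : 0 <= c) by (pose proof (peak_nonneg t b); lra).
  assert (Hlin : sqrt (12 * t) <= 12 * t * c + b).
  { rewrite <- (critical_point t b Ht); fold p.
    apply Rplus_le_compat_r, Rmult_le_compat_l; lra. }
  assert (Hsq : 12 * t <= (12 * t * c + b) ^ 2).
  { pose proof (sqrt_sqrt (12 * t)); pose proof (sqrt_pos (12 * t)); nra. }
  assert (dg t b c <= 0).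
  { unfold dg; pose proof (psi_pos t b c).
    apply Rmult_le_0_r; lra. }
  nra.
Qed.

(* Alternating sums of a unimodal function: if h >= 0 increases on [0, m]
   and decreases on [m, oo), then along any interlaced nonnegative sequence
   c 0 <= d 0 <= c 1 <= ... the sum of h (c n) - h (d n) is at most h m in
   absolute value.  Split h into the increasing part h (min x m) and the
   decreasing part h (max x m); each gives a one-signed interlaced sum. *)
Section UnimodalAlternatingSums.

Variables (h : R -> R) (m : R).
Hypothesis m_nonneg : 0 <= m.
Hypothesis h_nonneg : forall x, 0 <= x -> 0 <= h x.
Hypothesis h_increasing : forall x y, 0 <= x <= y -> y <= m -> h x <= h y.
Hypothesis h_decreasing : forall x y, m <= x <= y -> h y <= h x.

Lemma unimodal_alternating_sum (c d : nat -> R) (M : nat) :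
  (forall n, 0 <= c n) -> (forall n, c n <= d n <= c (S n)) ->
  Rabs (sum_f_R0 (fun n => h (c n) - h (d n)) M) <= h m.
Proof.
  intros Hc0 Hcd.
  set (hi := fun x => h (Rmin x m)).
  set (hd := fun x => h (Rmax x m)).
  assert (Hsplit : forall x, h x = hi x + hd x - h m).
  { intros x; unfold hi, hd, Rmin, Rmax.
    destruct (Rle_dec x m); destruct (Rle_dec x m); try ring; lra. }
  assert (Hmin : forall x, 0 <= x -> 0 <= Rmin x m <= m)
    by (intros x Hx; split; [apply Rmin_glb | apply Rmin_r]; lra).
  assert (Hhi : forall x y, 0 <= x <= y -> hi x <= hi y).
  { intros x y Hxy; unfold hi; apply h_increasing; [| apply Rmin_r].
    split; [apply Hmin; lra | apply Rle_min_compat_r; lra]. }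
  assert (Hhd : forall x y, 0 <= x <= y -> hd y <= hd x).
  { intros x y Hxy; unfold hd; apply h_decreasing.
    split; [apply Rmax_r | apply Rle_max_compat_r; lra]. }
  assert (Hbounds : forall x, 0 <= x -> 0 <= hi x <= h m /\ 0 <= hd x <= h m).
  { intros x Hx; unfold hi, hd; pose proof (Rmax_r x m); pose proof (Rmax_l x m).
    repeat split; [apply h_nonneg, Hmin, Hx | apply h_increasing; [apply Hmin, Hx | lra]
                  | apply h_nonneg; lra | apply h_decreasing; lra]. }
  assert (Hd0 : forall n, 0 <= d n) by (intros n; pose proof (Hc0 n); pose proof (Hcd n); lra).
  destruct (interlaced_gap_sum (fun n => hi (c n)) (fun n => hi (d n)) M)
    as [Hup0 Hup1].
  { intros n; pose proof (Hc0 n); pose proof (Hcd n); split; apply Hhi; lra. }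
  destruct (interlaced_gap_sum (fun n => - hd (c n)) (fun n => - hd (d n)) M)
    as [Hdown0 Hdown1].
  { intros n; pose proof (Hc0 n); pose proof (Hcd n);
      split; apply Ropp_le_contravar, Hhd; lra. }
  assert (Hflip : sum_f_R0 (fun n => - hd (d n) - - hd (c n)) M
                  = sum_f_R0 (fun n => hd (c n) - hd (d n)) M)
    by (apply sum_eq; intros; ring).
  assert (Hsum : sum_f_R0 (fun n => h (c n) - h (d n)) M
                 = sum_f_R0 (fun n => hd (c n) - hd (d n)) M
                   - sum_f_R0 (fun n => hi (d n) - hi (c n)) M).
  { rewrite <- minus_sum; apply sum_eq; intros n _.
    rewrite (Hsplit (c n)), (Hsplit (d n)); ring. }
  pose proof (Hbounds _ (Hc0 0%nat)); pose proof (Hbounds _ (Hd0 M)).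
  rewrite Hsum; apply Rabs_le_between; lra.
Qed.

End UnimodalAlternatingSums.

Definition pair_term (t b : R) (n : nat) : R :=
  psi t b (INR n) - psi t b (INR n + 2 / 3).

(* Its summands are nonnegative and dominated by the telescoping
   psi(n) - psi(n + 1), so the series converges. *)
Lemma pair_series_cv (t b : R) : 0 <= t -> 0 <= b ->
  exists S, infinite_sum (pair_term t b) S.
Proof.
  intros Ht Hb.
  assert (Hterm : forall n, 0 <= pair_term t b n
                            <= psi t b (INR n) - psi t b (INR (S n))).
  { intros n; unfold pair_term; pose proof (pos_INR n); rewrite S_INR.
    pose proof (psi_antitone t b (INR n) (INR n + 2 / 3)).
    pose proof (psi_antitone t b (INR n + 2 / 3) (INR n + 1)); lra. }
  destruct (growing_cv (fun M => sum_f_R0 (pair_term t b) M)) as [S HS].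
  - intros M; simpl; pose proof (Hterm (S M)); lra.
  - exists 1; intros s [M ->].
    apply Rle_trans with (sum_f_R0 (fun n => psi t b (INR n) - psi t b (INR (S n))) M).
    + apply sum_Rle; intros n _; apply Hterm.
    + rewrite (telescoping_sum (fun n => psi t b (INR n))).
      change (INR 0) with 0; rewrite psi_at_0.
      pose proof (psi_pos t b (INR (S M))); lra.
  - exists S; exact HS.
Qed.

(* Comparison with the telescoped sum: by the mean value theorem
   psi(n) - psi(n + 2/3) = (2/3) g(xi n) and psi(n + 2/3) - psi(n + 1)
   = (1/3) g(eta n), so the M-th partial sum differs from
   (2/3) (1 - psi(M + 1)) by (2/9) times the alternating sum of the unimodal
   function g along xi 0 < eta 0 < xi 1 < eta 1 < ... *)
Lemma pair_sum_near_telescoped (t b : R) (M : nat) : 0 < t -> 0 < b ->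
  Rabs (sum_f_R0 (pair_term t b) M - 2 / 3 * (1 - psi t b (INR (S M))))
  <= 2 / 9 * (b + sqrt (6 * t)).
Proof.
  intros Ht Hb.
  destruct (choice (fun n c => INR n < c < INR n + 2 / 3 /\
                               pair_term t b n = 2 / 3 * g t b c)) as [xi Hxi].
  { intros n; apply psi_mvt; lra. }
  destruct (choice (fun n c => INR n + 2 / 3 < c < INR n + 1 /\
      psi t b (INR n + 2 / 3) - psi t b (INR (S n)) = 1 / 3 * g t b c))
    as [eta Heta].
  { intros n; rewrite S_INR.
    replace (INR n + 1) with (INR n + 2 / 3 + 1 / 3) by field.
    apply psi_mvt; lra. }
  set (X := sum_f_R0 (fun n => g t b (xi n)) M).
  set (Y := sum_f_R0 (fun n => g t b (eta n)) M).
  assert (HP : sum_f_R0 (pair_term t b) M = 2 / 3 * X).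
  { unfold X; rewrite scal_sum; apply sum_eq; intros n _.
    rewrite (proj2 (Hxi n)); ring. }
  assert (HT : sum_f_R0 (fun n => psi t b (INR n) - psi t b (INR (S n))) M
               = 2 / 3 * X + 1 / 3 * Y).
  { unfold X, Y; rewrite !scal_sum, <- plus_sum; apply sum_eq; intros n _.
    destruct (Hxi n) as [_ Hx]; destruct (Heta n) as [_ He].
    unfold pair_term in Hx; lra. }
  rewrite (telescoping_sum (fun n => psi t b (INR n))) in HT.
  change (INR 0) with 0 in HT; rewrite psi_at_0 in HT.
  assert (Halt : Rabs (X - Y) <= b + sqrt (6 * t)).
  { unfold X, Y; rewrite <- minus_sum.
    apply Rle_trans with (g t b (peak t b));
      [| apply g_le; [lra | lra | apply peak_nonneg]].
    apply unimodal_alternating_sum.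
    - apply peak_nonneg.
    - intros; apply g_nonneg; lra.
    - intros; apply g_increasing; lra.
    - intros; apply g_decreasing; lra.
    - intros n; pose proof (pos_INR n); pose proof (Hxi n); lra.
    - intros n; pose proof (Hxi n); pose proof (Hxi (S n)); pose proof (Heta n).
      rewrite S_INR in *; lra. }
  rewrite HP, HT.
  replace (2 / 3 * X - 2 / 3 * (2 / 3 * X + 1 / 3 * Y)) with (2 / 9 * (X - Y))
    by field.
  rewrite Rabs_mult, (Rabs_pos_eq (2 / 9)) by lra.
  apply Rmult_le_compat_l; lra.
Qed.

(* The telescoped comparison sequence tends to 2/3, since
   psi(n) <= e^{-b n} tends to 0. *)
Lemma telescoped_cv (t b : R) : 0 <= t -> 0 < b ->
  Un_cv (fun M => 2 / 3 * (1 - psi t b (INR (S M)))) (2 / 3).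
Proof.
  intros Ht Hb e He.
  set (q := exp (- b)).
  assert (Hq : 0 < q < 1)
    by (split; [apply exp_pos | unfold q; rewrite <- exp_0; apply exp_increasing; lra]).
  destruct (pow_lt_1_zero q ltac:(rewrite Rabs_pos_eq; lra) e He) as [N HN].
  exists N; intros M HM; unfold R_dist.
  assert (Hpsi : psi t b (INR (S M)) <= q ^ S M).
  { unfold q; rewrite <- exp_mult_INR; unfold psi; apply exp_le_compat.
    pose proof (pos_INR (S M)); nra. }
  specialize (HN (S M) ltac:(lia)); rewrite Rabs_pos_eq in HN by (apply pow_le; lra).
  pose proof (psi_pos t b (INR (S M))).
  rewrite Rabs_left1; lra.
Qed.

(* For b = 2 t + 3 a the profile factors as psi(x) = e^{-3 a x} p(x) with
   p(x) = exp(-(6 t x^2 + 2 t x)) = 1 - O(t (6 x^2 + 2 x)); hence each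
   summand is close to the geometric term (1 - e^{-2a}) e^{-3 a n}. *)
Lemma pair_term_near_geometric (t a : R) (n : nat) : 0 < t -> 0 <= a ->
  Rabs (pair_term t (2 * t + 3 * a) n
        - (1 - exp (- (2 * a))) * exp (- (3 * a) * INR n))
  <= t * (6 * INR n ^ 2 + 10 * INR n + 4) * exp (- (3 * a) * INR n).
Proof.
  intros Ht Ha; unfold pair_term.
  set (x := INR n); assert (Hx : 0 <= x) by apply pos_INR.
  set (E := exp (- (3 * a) * x)); set (r := exp (- (2 * a))).
  set (p1 := exp (- (6 * t * x ^ 2 + 2 * t * x))).
  set (p2 := exp (- (6 * t * (x + 2 / 3) ^ 2 + 2 * t * (x + 2 / 3)))).
  assert (E1 : psi t (2 * t + 3 * a) x = p1 * E)
    by (unfold psi, p1, E; rewrite <- exp_plus; f_equal; ring).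
  assert (E2 : psi t (2 * t + 3 * a) (x + 2 / 3) = p2 * E * r)
    by (unfold psi, p2, E, r; rewrite <- !exp_plus; f_equal; field).
  rewrite E1, E2.
  assert (HE : 0 < E) by apply exp_pos.
  assert (Hr : 0 < r <= 1)
    by (split; [apply exp_pos | unfold r; rewrite <- exp_0; apply exp_le_compat; lra]).
  assert (Hp1 : p1 <= 1) by (unfold p1; rewrite <- exp_0; apply exp_le_compat; nra).
  assert (Hp21 : p2 <= p1) by (unfold p1, p2; apply exp_le_compat; nra).
  assert (Hp2 : 0 < p2) by apply exp_pos.
  assert (Hdefect : 1 - p2 <= t * (6 * x ^ 2 + 10 * x + 4)).
  { pose proof (exp_ineq1_le (- (6 * t * (x + 2 / 3) ^ 2 + 2 * t * (x + 2 / 3))))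
      as Hlin.
    fold p2 in Hlin; nra. }
  replace (p1 * E - p2 * E * r - (1 - r) * E)
    with (E * ((p1 - 1) + r * (1 - p2))) by ring.
  rewrite Rabs_mult, (Rabs_pos_eq E) by lra.
  rewrite (Rmult_comm _ E); apply Rmult_le_compat_l; [lra |].
  apply Rabs_le_between; split; nra.
Qed.

(* A quadratic factor is absorbed by trading e^{-2 a x}, via x e^{-a x} <= 1/a. *)
Lemma poly_exp_le (a x : R) : 0 < a -> 0 <= x ->
  (6 * x ^ 2 + 10 * x + 4) * exp (- (3 * a) * x)
  <= (6 / a ^ 2 + 10 / a + 4) * exp (- a * x).
Proof.
  intros Ha Hx.
  set (X := exp (- a * x)).
  assert (E3 : exp (- (3 * a) * x) = X * X * X)
    by (unfold X; rewrite <- !exp_plus; f_equal; ring).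
  rewrite E3.
  assert (HX : 0 < X) by apply exp_pos.
  assert (HX1 : X <= 1) by (unfold X; rewrite <- exp_0; apply exp_le_compat; nra).
  set (ia := / a).
  assert (Hia : a * ia = 1) by (unfold ia; field; lra).
  assert (Hia0 : 0 < ia) by (unfold ia; apply Rinv_0_lt_compat, Ha).
  set (u := x * X).
  assert (Hu : 0 <= u <= ia).
  { pose proof (one_plus_mul_exp_neg_le (a * x)) as Hlin.
    replace (exp (- (a * x))) with X in Hlin by (unfold X; f_equal; ring).
    split; [unfold u; nra |].
    apply Rmult_le_reg_l with a; [exact Ha |]; unfold u; nra. }
  replace (6 / a ^ 2 + 10 / a + 4) with (6 * ia ^ 2 + 10 * ia + 4)
    by (unfold ia; field; lra).
  replace ((6 * x ^ 2 + 10 * x + 4) * (X * X * X))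
    with (6 * u ^ 2 * X + 10 * u * X * X + 4 * X * X * X) by (unfold u; ring).
  assert (u ^ 2 <= ia ^ 2) by nra.
  assert (u * X * X <= ia * X) by (assert (X * X <= X) by nra; nra).
  assert (X * X * X <= X) by nra.
  nra.
Qed.

Lemma exp_series_le (a : R) (M : nat) : 0 < a ->
  sum_f_R0 (fun n => exp (- a * INR n)) M <= (1 + a) / a.
Proof.
  intros Ha.
  set (q := exp (- a)).
  assert (Hq : 0 < q < 1)
    by (split; [apply exp_pos | unfold q; rewrite <- exp_0; apply exp_increasing; lra]).
  apply Rle_trans with (1 / (1 - q)).
  - apply sum_incr; [| intros; left; apply exp_pos].
    apply Un_cv_ext with (fun M => sum_f_R0 (fun n => 1 * q ^ n) M);
      [| apply geometric_cv; lra].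
    intros N; apply sum_eq; intros n _; unfold q; rewrite exp_mult_INR; ring.
  - pose proof (one_plus_mul_exp_neg_le a) as Hlin; fold q in Hlin.
    apply Rmult_le_reg_l with (a * (1 - q)); [apply Rmult_lt_0_compat; lra |].
    replace (a * (1 - q) * (1 / (1 - q))) with a by (field; lra).
    replace (a * (1 - q) * ((1 + a) / a)) with ((1 + a) * (1 - q)) by (field; lra).
    nra.
Qed.

(* The geometric model sums to F(a): with q = e^{-a},
   F(a) = (1 + q) / (1 + q + q^2) = (1 - q^2) / (1 - q^3). *)
Lemma geometric_model_cv (a : R) : 0 < a ->
  Un_cv (fun M => sum_f_R0
           (fun n => (1 - exp (- (2 * a))) * exp (- (3 * a) * INR n)) M) (F a).
Proof.
  intros Ha.
  set (q := exp (- a)).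
  assert (Hq : 0 < q < 1)
    by (split; [apply exp_pos | unfold q; rewrite <- exp_0; apply exp_increasing; lra]).
  assert (E2 : exp (- (2 * a)) = q ^ 2)
    by (unfold q; rewrite <- exp_mult_INR; f_equal; simpl; ring).
  assert (E3 : exp (- (3 * a)) = q ^ 3)
    by (unfold q; rewrite <- exp_mult_INR; f_equal; simpl; ring).
  assert (HF : F a = (1 - q ^ 2) / (1 - q ^ 3)).
  { unfold F; fold q; rewrite E2; simpl; field; split; nra. }
  rewrite HF, E2.
  apply Un_cv_ext with (fun M => sum_f_R0 (fun n => (1 - q ^ 2) * (q ^ 3) ^ n) M).
  - intros M; apply sum_eq; intros n _; rewrite exp_mult_INR, E3; reflexivity.
  - apply geometric_cv; simpl; split; nra.
Qed.

Lemma pair_sum_near_geometric (t a : R) (M : nat) : 0 < t -> 0 < a ->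
  Rabs (sum_f_R0 (pair_term t (2 * t + 3 * a)) M
        - sum_f_R0 (fun n => (1 - exp (- (2 * a))) * exp (- (3 * a) * INR n)) M)
  <= t * (6 / a ^ 2 + 10 / a + 4) * ((1 + a) / a).
Proof.
  intros Ht Ha.
  rewrite <- minus_sum.
  eapply Rle_trans; [apply Rsum_abs |].
  apply Rle_trans with
    (sum_f_R0 (fun n => exp (- a * INR n) * (t * (6 / a ^ 2 + 10 / a + 4))) M).
  - apply sum_Rle; intros n _.
    eapply Rle_trans; [apply pair_term_near_geometric; lra |].
    pose proof (poly_exp_le a (INR n) Ha (pos_INR n)) as Hpoly.
    rewrite Rmult_assoc, (Rmult_comm (exp _)), Rmult_assoc.
    apply Rmult_le_compat_l; lra.
  - rewrite <- (scal_sum (fun n => exp (- a * INR n))); apply Rmult_le_compat_l; [| apply exp_series_le, Ha].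
    apply Rmult_le_pos; [lra |].
    assert (0 <= 6 / a ^ 2) by (apply Rdiv_le_0_compat; nra).
    assert (0 <= 10 / a) by (apply Rdiv_le_0_compat; lra).
    lra.
Qed.

(* F takes values in [2/3, 2/3 + a] on [0, oo): with q = e^{-a},
   F(a) - 2/3 = (1 - q) (1 + 2 q) / (3 (1 + q + q^2)) and 1 - q <= a. *)
Lemma F_bounds (a : R) : 0 <= a -> 2 / 3 <= F a <= 2 / 3 + a.
Proof.
  intros Ha.
  set (q := exp (- a)).
  assert (Hq0 : 0 < q) by apply exp_pos.
  assert (Hq1 : q <= 1) by (unfold q; rewrite <- exp_0; apply exp_le_compat; lra).
  assert (Hqa : 1 - a <= q) by (unfold q; pose proof (exp_ineq1_le (- a)); lra).
  assert (E2 : exp (- (2 * a)) = q * q)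
    by (unfold q; rewrite <- exp_plus; f_equal; ring).
  unfold F; fold q; rewrite E2.
  set (K := (1 + 2 * q) / (3 * (1 + q + q * q))).
  assert (HK : K * (3 * (1 + q + q * q)) = 1 + 2 * q) by (unfold K; field; nra).
  assert (HK01 : 0 <= K <= 1)
    by (split; [unfold K; apply Rdiv_le_0_compat |]; nra).
  replace ((1 + q) / (1 + q + q * q)) with (2 / 3 + (1 - q) * K)
    by (unfold K; field; nra).
  split; nra.
Qed.

Lemma large_regime_error_le (t tau a : R) : 0 < t <= tau ^ 4 -> 0 < tau <= 1 ->
  tau <= a -> t * (6 / a ^ 2 + 10 / a + 4) * ((1 + a) / a) <= 40 * tau.
Proof.
  intros Ht Htau Ha.
  set (ia := / a); set (w := / tau).
  assert (Hw : tau * w = 1) by (unfold w; field; lra).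
  assert (Hia0 : 0 < ia) by (unfold ia; apply Rinv_0_lt_compat; lra).
  assert (Hiaw : ia <= w) by (unfold ia, w; apply Rinv_le_contravar; lra).
  assert (Hw1 : 1 <= w) by nra.
  replace (t * (6 / a ^ 2 + 10 / a + 4) * ((1 + a) / a))
    with (t * ((6 * ia ^ 2 + 10 * ia + 4) * (1 + ia))) by (unfold ia; field; lra).
  assert (Hpoly : (6 * ia ^ 2 + 10 * ia + 4) * (1 + ia) <= 40 * (w * w * w)).
  { assert (6 * ia ^ 2 + 10 * ia + 4 <= 20 * (w * w)) by nra.
    assert (0 <= 6 * ia ^ 2 + 10 * ia + 4) by nra.
    nra. }
  apply Rle_trans with (tau ^ 4 * (40 * (w * w * w))).
  - apply Rmult_le_compat; nra.
  - replace (tau ^ 4 * (40 * (w * w * w))) with (40 * tau * ((tau * w) ^ 3)) by ring.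
    rewrite Hw; lra.
Qed.

Lemma pair_series_estimate (t tau a : R) :
  0 < t <= tau ^ 4 -> 0 < tau <= 1 -> 0 <= a ->
  exists S, infinite_sum (pair_term t (2 * t + 3 * a)) S /\
            Rabs (S - F a) <= 40 * tau.
Proof.
  intros Ht Htau Ha.
  set (b := 2 * t + 3 * a).
  destruct (pair_series_cv t b) as [S HS]; [lra | unfold b; lra |].
  exists S; split; [exact HS |].
  destruct (Rle_or_lt tau a) as [Hlarge | Hsmall].
  - apply Rle_trans with (t * (6 / a ^ 2 + 10 / a + 4) * ((1 + a) / a));
      [| apply large_regime_error_le; lra].
    apply (Un_cv_dist_le _ _ _ _ _ HS (geometric_model_cv a ltac:(lra))).
    intros M; apply pair_sum_near_geometric; lra.
  - assert (Hnear : Rabs (S - 2 / 3) <= 2 / 9 * (b + sqrt (6 * t))).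
    { apply (Un_cv_dist_le _ _ _ _ _ HS (telescoped_cv t b ltac:(lra) ltac:(unfold b; lra))).
      intros M; apply pair_sum_near_telescoped; unfold b; lra. }
    assert (Hsq : tau * tau <= tau) by nra.
    assert (Htau4 : tau ^ 4 <= tau * tau)
      by (replace (tau ^ 4) with ((tau * tau) * (tau * tau)) by ring; nra).
    assert (Hsqrt : sqrt (6 * t) <= 3 * tau).
    { rewrite <- (sqrt_square (3 * tau)) by lra; apply sqrt_le_1_alt; nra. }
    pose proof (F_bounds a Ha).
    apply Rabs_le_between in Hnear; apply Rabs_le_between; unfold b in Hnear; lra.
Qed.

Lemma B_bounds : 0 < B <= 4.
Proof.
  unfold B; pose proof PI_RGT_0; pose proof PI_4.
  assert (H6 : 2 <= sqrt 6)
    by (rewrite <- (sqrt_square 2) by lra; apply sqrt_le_1_alt; lra).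
  split; [apply Rdiv_lt_0_compat; lra |].
  apply Rle_trans with (2 * PI / 2); [| lra].
  apply Rmult_le_compat_l; [lra | apply Rinv_le_contravar; lra].
Qed.

(* Q1(n, l) = 6 n^2 + (2 + 3 l) n, and Q2(n, l) is the same quadratic at
   n + 2/3; so the summands of I_M(l, N) are pair terms with
   t = B / (2 sqrt N) and a = t l. *)
Lemma IM_term_pair_term (l N n : nat) : 0 < INR N ->
  IM_term l N n
  = pair_term (B / (2 * sqrt (INR N)))
      (2 * (B / (2 * sqrt (INR N))) + 3 * (B / (2 * sqrt (INR N)) * INR l)) n.
Proof.
  intros HN; assert (0 < sqrt (INR N)) by (apply sqrt_lt_R0, HN).
  unfold IM_term, pair_term, psi, Q2, Q1.
  f_equal; f_equal; f_equal; field; lra.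
Qed.

Lemma Rpower_eighth_pow4 (x : R) : 0 < x -> Rpower x (- (1 / 8)) ^ 4 = / sqrt x.
Proof.
  intros Hx.
  rewrite <- Rpower_pow by (unfold Rpower; apply exp_pos).
  rewrite Rpower_mult.
  replace (- (1 / 8) * INR 4) with (- / 2) by (simpl; field).
  rewrite Rpower_Ropp, Rpower_sqrt by exact Hx; reflexivity.
Qed.

(* The scale tau = min(1, 2 x^{-1/8}) is admissible for t = B / (2 sqrt x),
   since t <= 2 / sqrt x <= tau^4, and it is O(x^{-1/10}). *)
Lemma scale_bounds (x : R) : 4 <= x ->
  0 < B / (2 * sqrt x) <= Rmin 1 (2 * Rpower x (- (1 / 8))) ^ 4 /\
  0 < Rmin 1 (2 * Rpower x (- (1 / 8))) <= 1 /\
  Rmin 1 (2 * Rpower x (- (1 / 8))) <= 2 * Rpower x (- (1 / 10)).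
Proof.
  intros Hx.
  set (s := sqrt x); set (R8 := Rpower x (- (1 / 8))).
  assert (Hs : 2 <= s)
    by (unfold s; rewrite <- (sqrt_square 2) by lra; apply sqrt_le_1_alt; lra).
  destruct B_bounds as [HB0 HB4].
  assert (HR8 : 0 < R8) by (unfold R8, Rpower; apply exp_pos).
  assert (Hinv : 0 < / s <= 1 / 2)
    by (split; [apply Rinv_0_lt_compat | unfold Rdiv; rewrite Rmult_1_l;
                 apply Rinv_le_contravar]; lra).
  assert (Ht : B / (2 * s) <= 2 * / s)
    by (unfold Rdiv; rewrite Rinv_mult, <- Rmult_assoc;
        apply Rmult_le_compat_r; lra).
  assert (Ht0 : 0 < B / (2 * s)) by (apply Rdiv_lt_0_compat; lra).
  split; [split; [exact Ht0 |] | split].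
  - unfold Rmin; destruct Rle_dec as [_ | Hlt]; [lra |].
    replace ((2 * R8) ^ 4) with (16 * R8 ^ 4) by ring.
    unfold R8; rewrite Rpower_eighth_pow4 by lra; fold s; lra.
  - unfold Rmin; destruct Rle_dec; lra.
  - pose proof (Rmin_r 1 (2 * R8)).
    assert (R8 <= Rpower x (- (1 / 10))) by (apply Rle_Rpower; lra).
    lra.
Qed.

(* Apply the series estimate at the scale above and use F >= 2/3 to turn
   the absolute error 40 tau <= 80 N^{-1/10} into a relative one.  The
   bound holds for every l >= 0. *)
Theorem mainTheorem8 :
  exists C N0 : R, 0 < C /\
    forall N l : nat, N0 <= INR N ->
      INR l <= sqrt (INR N) * (ln (INR N)) ^ 2 ->
      exists S : R,
        infinite_sum (IM_term l N) S /\
        Rabs (S - F (B * INR l / (2 * sqrt (INR N))))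
          <= C * Rpower (INR N) (- (1 / 10)) * F (B * INR l / (2 * sqrt (INR N))).
Proof.
  exists 120, 4; split; [lra |]; intros N l HN _.
  set (t := B / (2 * sqrt (INR N))); set (a := t * INR l).
  set (tau := Rmin 1 (2 * Rpower (INR N) (- (1 / 8)))).
  destruct (scale_bounds (INR N) HN) as [Ht [Htau Htau10]]; fold t tau in Ht, Htau, Htau10.
  assert (Ha : 0 <= a) by (unfold a; pose proof (pos_INR l); nra).
  destruct (pair_series_estimate t tau a Ht Htau Ha) as [S [HS Hest]].
  exists S; split.
  - apply Un_cv_ext with (fun M => sum_f_R0 (pair_term t (2 * t + 3 * a)) M);
      [| exact HS].
    intros M; apply sum_eq; intros n _.
    rewrite IM_term_pair_term by lra; reflexivity.
  - replace (B * INR l / (2 * sqrt (INR N))) with a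
      by (unfold a, t; field; apply Rgt_not_eq, sqrt_lt_R0; lra).
    pose proof (F_bounds a Ha).
    assert (0 < Rpower (INR N) (- (1 / 10))) by (unfold Rpower; apply exp_pos).
    nra.
Qed.
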